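(* Let $\mathcal S$ be a trajectory set satisfying $\bar\sigma(0)\ge0$. If $\bar I(f)=\bar\sigma(f)$ for every $f\in(\mathcal L^1_{(L)})^+$, then the hedging price integral $\int_{(L)}:\mathcal L^1_{(L)}\to\mathbb R$ is strictly positive, i.e. for every $f\in(\mathcal L^1_{(L)})^+$ with $\int_{(L)}f=0$, $f$ is a null function.
   Context: Fix $s_0\in\mathbb R$. A trajectory set is any set $\mathcal S$ of real sequences $S=(S_j)_{j\in\mathbb N_0}$ with $S_0=s_0$. A simple portfolio $(V,n,H)$ consists of $V\in\mathbb R$, $n\in\mathbb N$ and nonanticipating functions $H_i:\mathcal S\to\mathbb R$, $0\le i\le n-1$ (i.e. $H_i(S)=h_i(S_0,\dots,S_i)$ for some arbitrary $h_i:\mathbb R^{i+1}\to\mathbb R$). Its wealth is $\Pi^{V,n,H}_j(S)=V+\sum_{i=0}^{\min\{j,n\}-1}H_i(S)(S_{i+1}-S_i)$ and $\Pi^{V,n,H}_\infty:=\Pi^{V,n,H}_n$; it is positive if $V\ge0$ and $\Pi^{V,n,H}_\infty\ge0$ on $\mathcal S$. A generalized portfolio is a sequence $(V_m,n_m,H_m)_{m\in\mathbb N_0}$ of simple portfolios, positive for every $m\ge1$; it is a positive generalized portfolio if moreover $\Pi^{V_0,n_0,H_0}_j\equiv0$ for all $j$. A map $f:\mathcal S\to[-\infty,+\infty]$ is superhedged with initial endowment $V=\sum_{m=0}^\infty V_m\in(-\infty,+\infty]$ by such a portfolio if $f\le\sum_{m=0}^\infty\Pi^{V_m,n_m,H_m}_\infty$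 on $\mathcal S$. For $f\ge0$, $\bar I(f)$ is the infimum of initial endowments of positive generalized portfolios superhedging $f$; $\bar\sigma(f)$ is the infimum of initial endowments of generalized portfolios superhedging $f$. Let $\mathcal E=\{\Pi^{V,n,H}_\infty\}$ over all simple portfolios. Under $\bar\sigma(0)\ge0$, $I(\Pi^{V,n,H}_\infty):=V$ is a well-defined linear functional on $\mathcal E$. Define $\|f\|:=\bar I(|f|)$; $f$ is a null function if $\|f\|=0$. Let $\mathcal F$ be the space of real-valued $f$ with $\|f\|<\infty$ and $\mathcal E'=\{f\in\mathcal E:\|f\|<\infty\}$. Under $\bar\sigma(0)\ge0$, $I|_{\mathcal E'}$ is $\|\cdot\|$-continuous; $\mathcal L^1_{(L)}$ is the $\|\cdot\|$-closure of $\mathcal E'$ in $\mathcal F$ and $\int_{(L)}$ the unique $\|\cdot\|$-continuous linear extension of $I|_{\mathcal E'}$ to $\mathcal L^1_{(L)}$; it satisfies $\int_{(L)}f=\bar\sigma(f)$ for $f\in\mathcal L^1_{(L)}$. $(\mathcal L^1_{(L)})^+$ denotes the nonnegative elements of $\mathcal L^1_{(L)}$. *)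

From HB Require Import structures.
From mathcomp Require Import all_boot all_order all_algebra.
From mathcomp Require Import all_classical all_reals all_analysis.
Set Implicit Arguments. Unset Strict Implicit. Unset Printing Implicit Defensive.
Import Order.TTheory GRing.Theory Num.Theory.
Import numFieldNormedType.Exports.
Local Open Scope classical_set_scope.
Local Open Scope ring_scope.

Section Hedging.
Variable R : realType.

Definition traj := nat -> R.

Definition trajectory_set (s0 : R) (Sset : set traj) :=
  forall S, Sset S -> S 0%N = s0.

Definition nonanticipating (H : nat -> traj -> R) :=
  forall (i : nat) (S S' : traj),
    (forall j : nat, (j <= i)%N -> S j = S' j) -> H i S = H i S'.

Definition simple_portfolio (V : R) (n : nat) (H : nat -> traj -> R) :=
  (0 < n)%N /\ nonanticipating H.

Definition wealth (V : R) (n : nat) (H : nat -> traj -> R) (j : nat) (S : traj) : R :=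
  V + \sum_(0 <= i < minn j n) H i S * (S i.+1 - S i).

Definition wealth_inf (V : R) (n : nat) (H : nat -> traj -> R) (S : traj) : R :=
  wealth V n H n S.

Definition positive_portfolio (Sset : set traj) V n H :=
  0 <= V /\ forall S, Sset S -> 0 <= wealth_inf V n H S.

Definition generalized_portfolio (Sset : set traj)
    (V : nat -> R) (n : nat -> nat) (H : nat -> nat -> traj -> R) :=
  (forall m, simple_portfolio (V m) (n m) (H m)) /\
  (forall m, (1 <= m)%N -> positive_portfolio Sset (V m) (n m) (H m)).

Definition positive_generalized_portfolio (Sset : set traj) V n H :=
  generalized_portfolio Sset V n H /\
  (forall (j : nat) S, Sset S -> wealth (V 0%N) (n 0%N) (H 0%N) j S = 0).

(* initial endowment  sum_m V_m  in (-oo,+oo] (terms m >= 1 are >= 0) *)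
Definition endowment (V : nat -> R) : \bar R :=
  ((V 0%N)%:E + \sum_(1 <= m <oo) (V m)%:E)%E.

Definition total_wealth (V : nat -> R) (n : nat -> nat) (H : nat -> nat -> traj -> R)
    (S : traj) : \bar R :=
  ((wealth_inf (V 0%N) (n 0%N) (H 0%N) S)%:E +
   \sum_(1 <= m <oo) (wealth_inf (V m) (n m) (H m) S)%:E)%E.

Definition superhedges (Sset : set traj) (f : traj -> \bar R) V n H :=
  forall S, Sset S -> (f S <= total_wealth V n H S)%E.

Definition Ibar (Sset : set traj) (f : traj -> \bar R) : \bar R :=
  ereal_inf [set e | exists V n H, positive_generalized_portfolio Sset V n H /\
                     superhedges Sset f V n H /\ e = endowment V].

Definition sigmabar (Sset : set traj) (f : traj -> \bar R) : \bar R :=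
  ereal_inf [set e | exists V n H, generalized_portfolio Sset V n H /\
                     superhedges Sset f V n H /\ e = endowment V].

Definition hnorm (Sset : set traj) (f : traj -> R) : \bar R :=
  Ibar Sset (fun S => (`|f S|)%:E).

Definition null_function (Sset : set traj) (f : traj -> R) := hnorm Sset f = 0%E.

Definition Fspace (Sset : set traj) : set (traj -> R) :=
  [set f | (hnorm Sset f < +oo)%E].

Definition Eprime (Sset : set traj) : set (traj -> R) :=
  [set f | (exists V n H, simple_portfolio V n H /\
              forall S, Sset S -> f S = wealth_inf V n H S) /\
           (hnorm Sset f < +oo)%E].

Definition L1 (Sset : set traj) : set (traj -> R) :=
  [set f | Fspace Sset f /\
     forall eps : R, 0 < eps ->
       exists e, Eprime Sset e /\ (hnorm Sset (fun S => (f S - e S)%R) < eps%:E)%E].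

Definition L1plus (Sset : set traj) : set (traj -> R) :=
  [set f | L1 Sset f /\ forall S, Sset S -> 0 <= f S].

(* v is the value of the continuous extension of I|E' at f:
   f is the ||.||-limit of terminal wealths Pi^{V_k,n_k,H_k}_infty in E'
   and v = lim I(Pi^{V_k,n_k,H_k}_infty) = lim V_k *)
Definition is_Lint (Sset : set traj) (f : traj -> R) (v : R) :=
  exists (V : nat -> R) (n : nat -> nat) (H : nat -> nat -> traj -> R),
    (forall k, simple_portfolio (V k) (n k) (H k)) /\
    (forall k, Eprime Sset (wealth_inf (V k) (n k) (H k))) /\
    ((fun k => hnorm Sset (fun S => f S - wealth_inf (V k) (n k) (H k) S)) @ \oo
       --> 0%E) /\
    (V @ \oo --> v).

Definition Lint (Sset : set traj) (f : traj -> R) : R :=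
  xget 0 [set v | is_Lint Sset f v].

End Hedging.

From HB Require Import structures.
From mathcomp Require Import all_boot all_order all_algebra.
From mathcomp Require Import all_classical all_reals all_analysis.
From mathcomp Require Import lra.
Import Order.TTheory GRing.Theory Num.Theory.
Import numFieldNormedType.Exports.
Set Implicit Arguments. Unset Strict Implicit.
Local Open Scope classical_set_scope.
Local Open Scope ring_scope.

(* If f >= 0 is approximated in ||.|| by simple wealths Pi_k with prices V_k -> 0, then
   f <= Pi_k + 2 |f - Pi_k| superhedges f with a generalized portfolio of endowment
   about V_k + 2 ||f - Pi_k||, so sigmabar(f) <= 0.  Since ||f|| = Ibar(f) = sigmabar(f)
   and Ibar >= 0, ||f|| = 0.  The existence of such an approximating sequence with
   convergent prices is where sigmabar(0) >= 0 enters: two simple wealths close to the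
   same f in ||.|| have close prices, so the prices form a Cauchy sequence. *)

Section Sequences.
Variable R : realType.

Lemma sum_nat_widen_if (x : nat -> R) n m : (n <= m)%N ->
  \sum_(0 <= i < m) (if (i < n)%N then x i else 0) = \sum_(0 <= i < n) x i.
Proof. by move=> nm; rewrite (big_nat_widen _ _ _ xpredT _ nm) [RHS]big_mkcond. Qed.

Lemma cvgn_of_dist_le (u b : R ^nat) : b @ \oo --> 0 ->
  (forall k l, `|u k - u l| <= b k + b l) -> cvgn u.
Proof.
move=> b0 ub; apply: R_complete; apply: cauchy_exP => e e0.
have e20 : 0 < e / 2 by lra.
have [N _ bN] := @cvgr_lt _ _ _ _ _ _ b0 _ e20.
exists (u N), N => // k /= Nk; rewrite -ball_normE /=.
by apply: le_lt_trans (ub N k) _; have := bN N (leqnn N); have := bN k Nk; lra.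
Qed.

Lemma cvge0_lt (f : nat -> \bar R) (e : R) : 0 < e -> f @ \oo --> 0%E ->
  \forall k \near \oo, (f k < e%:E)%E.
Proof. by move=> e0 f0; exact: f0 _ (@nbhs_open_ereal_lt _ 0 (fun=> e) e0). Qed.

End Sequences.

Section SimplePortfolios.
Variable R : realType.
Implicit Types (V a b : R) (n : nat) (H : nat -> traj R -> R).

(* The strategies are cut off at their horizons, beyond which they are arbitrary. *)
Definition strategy_lincomb a b n H n' H' : nat -> traj R -> R :=
  fun i S => a * (if (i < n)%N then H i S else 0) + b * (if (i < n')%N then H' i S else 0).

Lemma wealth_infE V n H S :
  wealth_inf V n H S = V + \sum_(0 <= i < n) H i S * (S i.+1 - S i).
Proof. by rewrite /wealth_inf /wealth minnn. Qed.

Lemma wealth_inf_lincomb a b V n H V' n' H' S :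
  wealth_inf (a * V + b * V') (maxn n n') (strategy_lincomb a b n H n' H') S =
  a * wealth_inf V n H S + b * wealth_inf V' n' H' S.
Proof.
have truncE m (G : nat -> traj R -> R) i :
    (if (i < m)%N then G i S else 0) * (S i.+1 - S i) =
    if (i < m)%N then G i S * (S i.+1 - S i) else 0.
  by case: ifP; rewrite ?mul0r.
rewrite !wealth_infE /strategy_lincomb.
under eq_bigr do rewrite mulrDl -!mulrA !truncE.
rewrite big_split /= -!mulr_sumr !sum_nat_widen_if ?leq_maxl ?leq_maxr //.
by rewrite !mulrDr; lra.
Qed.

Lemma simple_portfolio_lincomb a b V n H V' n' H' :
  simple_portfolio V n H -> simple_portfolio V' n' H' ->
  simple_portfolio (a * V + b * V') (maxn n n') (strategy_lincomb a b n H n' H').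
Proof.
move=> [n0 nH] [_ nH']; split; first by rewrite (leq_trans n0) ?leq_maxl.
by move=> i S S' eqS; rewrite /strategy_lincomb (nH i S S' eqS) (nH' i S S' eqS).
Qed.

End SimplePortfolios.

Section Superhedging.
Variables (R : realType) (Sset : set (traj R)).

Lemma eq_Ibar (g g' : traj R -> \bar R) :
  (forall S, Sset S -> g S = g' S) -> Ibar Sset g = Ibar Sset g'.
Proof.
move=> gg; rewrite /Ibar; congr ereal_inf; apply/funext => e; apply/propext.
by split=> -[V [n [H [P [sh ->]]]]]; exists V, n, H; split=> //; split=> // S SS;
  [rewrite -gg | rewrite gg] => //; exact: sh.
Qed.

Lemma eq_hnorm (f f' : traj R -> R) :
  (forall S, Sset S -> f S = f' S) -> hnorm Sset f = hnorm Sset f'.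
Proof. by move=> ff; apply: eq_Ibar => S SS; rewrite ff. Qed.

Lemma Ibar_lt_exists g (a : R) : (Ibar Sset g < a%:E)%E ->
  exists V n H, positive_generalized_portfolio Sset V n H /\
    superhedges Sset g V n H /\ (endowment V < a%:E)%E.
Proof. by move=> /ereal_inf_lt [_ [V [n [H [P [sh ->]]]]] lt]; exists V, n, H. Qed.

(* On an empty trajectory set everything is superhedged by a negative cash position. *)
Lemma nonempty_of_sigmabar0_ge0 :
  (0 <= sigmabar Sset (fun _ => 0%E))%E -> exists S, Sset S.
Proof.
move=> s0; apply: contrapT => nS.
have {}nS S : ~ Sset S by move=> SS; apply: nS; exists S.
have : (sigmabar Sset (fun _ => 0%E) <= (-1)%:E)%E.
  apply: ge_ereal_inf; exists (-1)%:E => //.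
  exists (fun m => if m is 0%N then -1 else 0), (fun _ => 1%N), (fun _ _ _ => 0).
  split; [split|split].
  - by move=> m; split.
  - by move=> [//|m] _; split=> // S /nS.
  - by move=> S /nS.
  - by rewrite /endowment /= eseries0 ?adde0 //; case.
by move=> /(le_trans s0); rewrite lee_fin; lra.
Qed.

Section Nonempty.
Hypothesis Sset_nonempty : exists S, Sset S.

Lemma pgp_price0 V n H : positive_generalized_portfolio Sset V n H -> V 0%N = 0.
Proof.
have [S SS] := Sset_nonempty; move=> [_ W]; have := W 0%N S SS.
by rewrite /wealth min0n big_geq // addr0.
Qed.

Lemma pgp_wealth0 V n H : positive_generalized_portfolio Sset V n H ->
  forall S, Sset S -> wealth_inf (V 0%N) (n 0%N) (H 0%N) S = 0.
Proof. by move=> [_ W] S; exact: W. Qed.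

Lemma pgp_endowmentE V n H : positive_generalized_portfolio Sset V n H ->
  endowment V = (\sum_(1 <= m <oo) (V m)%:E)%E.
Proof. by move=> P; rewrite /endowment (pgp_price0 P) add0e. Qed.

Lemma Ibar_ge0 g : (0 <= Ibar Sset g)%E.
Proof.
apply/ereal_infP => _ [V [n [H [P [_ ->]]]]]; rewrite (pgp_endowmentE P).
apply: nneseries_ge0 => m m1 _.
by rewrite lee_fin; case: P => [[_ pos] _]; case: (pos m m1).
Qed.

(* Portfolio 0 is the given simple one; portfolio m >= 1 trades both m-th portfolios. *)
Lemma generalized_portfolio_add (v : R) k h VP nP HP VQ nQ HQ :
  simple_portfolio v k h ->
  positive_generalized_portfolio Sset VP nP HP ->
  positive_generalized_portfolio Sset VQ nQ HQ ->
  exists V n H, generalized_portfolio Sset V n H /\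
    endowment V = (v%:E + endowment VP + endowment VQ)%E /\
    forall S, Sset S -> total_wealth V n H S =
      ((wealth_inf v k h S)%:E + total_wealth VP nP HP S + total_wealth VQ nQ HQ S)%E.
Proof.
move=> sv P Q; have [[sP pP] _] := P; have [[sQ pQ] _] := Q.
exists (fun m => if m is 0%N then v else 1 * VP m + 1 * VQ m).
exists (fun m => if m is 0%N then k else maxn (nP m) (nQ m)).
exists (fun m => if m is 0%N then h else strategy_lincomb 1 1 (nP m) (HP m) (nQ m) (HQ m)).
split; [split|split].
- by case=> [|m] //=; apply: simple_portfolio_lincomb.
- case=> [//|m] _ /=; have [P1 P2] := pP m.+1 isT; have [Q1 Q2] := pQ m.+1 isT.
  split; first by rewrite !mul1r addr_ge0.
  by move=> S SS; rewrite wealth_inf_lincomb !mul1r addr_ge0 ?P2 ?Q2.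
- rewrite /endowment /= (pgp_price0 P) (pgp_price0 Q) !add0e -addeA.
  congr (_ + _)%E; rewrite -nneseriesD.
  + by apply: congr_lim; apply/funext => N; apply: eq_big_nat => -[|m] //= _;
      rewrite !mul1r EFinD.
  + by move=> i i1 _; rewrite lee_fin; case: (pP i i1).
  + by move=> i i1 _; rewrite lee_fin; case: (pQ i i1).
- move=> S SS; rewrite /total_wealth /=.
  rewrite (pgp_wealth0 P SS) (pgp_wealth0 Q SS) !add0e -addeA.
  congr (_ + _)%E; rewrite -nneseriesD.
  + by apply: congr_lim; apply/funext => N; apply: eq_big_nat => -[|m] //= _;
      rewrite wealth_inf_lincomb !mul1r EFinD.
  + by move=> i i1 _; rewrite lee_fin; case: (pP i i1) => _; apply.
  + by move=> i i1 _; rewrite lee_fin; case: (pQ i i1) => _; apply.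
Qed.

Lemma sigmabar_le_simple_add g (V a b : R) n H h1 h2 :
  simple_portfolio V n H ->
  (Ibar Sset h1 < a%:E)%E -> (Ibar Sset h2 < b%:E)%E ->
  (forall S, Sset S -> g S <= (wealth_inf V n H S)%:E + h1 S + h2 S)%E ->
  (sigmabar Sset g <= (V + a + b)%:E)%E.
Proof.
move=> sp /Ibar_lt_exists[VP [nP [HP [P [shP eP]]]]].
move=> /Ibar_lt_exists[VQ [nQ [HQ [Q [shQ eQ]]]]] gle.
have [GV [GN [GH [G [EG TG]]]]] := generalized_portfolio_add sp P Q.
apply: ge_ereal_inf; exists (endowment GV).
  exists GV, GN, GH; split=> //; split=> // S SS; rewrite TG //.
  apply: le_trans (gle S SS) _.
  by apply: leeD; [apply: leeD => //; exact: shP | exact: shQ].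
by rewrite EG !EFinD; apply: leeD; [apply: leeD => //|]; exact: ltW.
Qed.

Lemma sigmabar_le_approx (f : traj R -> R) (V a : R) n H : simple_portfolio V n H ->
  (hnorm Sset (fun S => (f S - wealth_inf V n H S)%R) < a%:E)%E ->
  (sigmabar Sset (fun S => (f S)%:E) <= (V + a + a)%:E)%E.
Proof.
move=> sp fa.
pose h S := (`|f S - wealth_inf V n H S|)%:E.
apply: (@sigmabar_le_simple_add _ _ _ _ _ _ h h sp fa fa) => S SS.
rewrite /h -!EFinD lee_fin; have := ler_norm (f S - wealth_inf V n H S).
by have := normr_ge0 (f S - wealth_inf V n H S); lra.
Qed.

End Nonempty.

Section Pricing.
Hypothesis sigmabar0_ge0 : (0 <= sigmabar Sset (fun _ => 0%E))%E.

Lemma price_sub_le (x : traj R -> R) (V1 V2 a b : R) n1 H1 n2 H2 :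
  simple_portfolio V1 n1 H1 -> simple_portfolio V2 n2 H2 ->
  (hnorm Sset (fun S => (x S - wealth_inf V1 n1 H1 S)%R) < a%:E)%E ->
  (hnorm Sset (fun S => (x S - wealth_inf V2 n2 H2 S)%R) < b%:E)%E ->
  V2 - V1 <= a + b.
Proof.
move=> sp1 sp2 h1 h2.
have ne := nonempty_of_sigmabar0_ge0 sigmabar0_ge0.
have sp := simple_portfolio_lincomb 1 (-1) sp1 sp2.
suff : (0 <= (1 * V1 + -1 * V2 + a + b)%:E)%E by rewrite lee_fin; lra.
apply: le_trans sigmabar0_ge0 (sigmabar_le_simple_add ne sp h1 h2 _) => S SS.
rewrite -!EFinD lee_fin wealth_inf_lincomb.
have := ler_norm (x S - wealth_inf V1 n1 H1 S).
by have := ler_norm (wealth_inf V2 n2 H2 S - x S); rewrite distrC; lra.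
Qed.

Lemma L1_harmonic_approx (f : traj R -> R) : L1 Sset f ->
  exists V n H, (forall k, simple_portfolio (V k) (n k) (H k)) /\
    (forall k, Eprime Sset (wealth_inf (V k) (n k) (H k))) /\
    (forall k, hnorm Sset (fun S => (f S - wealth_inf (V k) (n k) (H k) S)%R)
                 < (harmonic k)%:E)%E.
Proof.
move=> [_ fL1].
have : forall k, exists p : R * nat * (nat -> traj R -> R),
    simple_portfolio p.1.1 p.1.2 p.2 /\
    Eprime Sset (wealth_inf p.1.1 p.1.2 p.2) /\
    (hnorm Sset (fun S => (f S - wealth_inf p.1.1 p.1.2 p.2 S)%R) < (harmonic k)%:E)%E.
  move=> k; have [e [[[V [n [H [sp eW]]]] efin] fe]] := fL1 _ (harmonic_gt0 k).
  exists (V, n, H); split=> //; split.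
    by split; [exists V, n, H | rewrite -(eq_hnorm eW)].
  by rewrite -(@eq_hnorm (fun S => f S - e S)) // => S SS; rewrite eW.
move=> /choice[p hp]; exists (fun k => (p k).1.1), (fun k => (p k).1.2), (fun k => (p k).2).
by split; [|split] => k; case: (hp k) => [? []].
Qed.

Lemma is_Lint_exists (f : traj R -> R) : L1 Sset f -> exists v, is_Lint Sset f v.
Proof.
move=> /L1_harmonic_approx[V [n [H [sp [EV approx]]]]].
have ne := nonempty_of_sigmabar0_ge0 sigmabar0_ge0.
have cV : cvgn V.
  apply: (cvgn_of_dist_le (@cvg_harmonic R)) => k l.
  rewrite ler_norml; apply/andP; split.
    by have := price_sub_le (sp k) (sp l) (approx k) (approx l); lra.
  by have := price_sub_le (sp l) (sp k) (approx l) (approx k); lra.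
exists (limn V), V, n, H; do 3!split => //.
apply: (squeeze_cvge _ (cvg_cst _) (@cvge_harmonic R)).
by apply: nearW => k; rewrite Ibar_ge0 //=; exact: ltW.
Qed.

End Pricing.

Lemma sigmabar_le_Lint (f : traj R -> R) (v : R) :
  (exists S, Sset S) -> is_Lint Sset f v ->
  (sigmabar Sset (fun S => (f S)%:E) <= v%:E)%E.
Proof.
move=> ne [V [n [H [sp [_ [fV Vv]]]]]]; apply/lee_addgt0Pr => e e0.
have e3 : 0 < e / 3 by lra.
near \oo => k.
have fk :
    (hnorm Sset (fun S => (f S - wealth_inf (V k) (n k) (H k) S)%R) < (e / 3)%:E)%E.
  by near: k; exact: cvge0_lt.
have Vk : `|v - V k| < e / 3 by near: k; exact: cvgr_dist_lt.
apply: le_trans (sigmabar_le_approx ne (sp k) fk) _.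
by rewrite -EFinD lee_fin; have := ler_norm (V k - v); rewrite distrC; lra.
Unshelve. all: by end_near. Qed.

End Superhedging.

Theorem proposition3p9 (R : realType) (s0 : R) (Sset : set (traj R)) :
  trajectory_set s0 Sset ->
  (0 <= sigmabar Sset (fun _ => 0%E))%E ->
  (forall f, L1plus Sset f ->
     Ibar Sset (fun S => (f S)%:E) = sigmabar Sset (fun S => (f S)%:E)) ->
  forall f, L1plus Sset f -> Lint Sset f = 0 -> null_function Sset f.
Proof.
move=> _ sigmabar0_ge0 Ibar_sigmabar f fL Lf0.
have ne := nonempty_of_sigmabar0_ge0 sigmabar0_ge0.
have Lint_f : is_Lint Sset f 0.
  by rewrite -Lf0; apply: xgetPex; exact: is_Lint_exists (proj1 fL).
have hnormE : hnorm Sset f = sigmabar Sset (fun S => (f S)%:E).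
  by rewrite -Ibar_sigmabar //; apply: eq_Ibar => S SS; rewrite ger0_norm ?(proj2 fL).
apply/eqP; rewrite eq_le Ibar_ge0 // andbT hnormE.
exact: sigmabar_le_Lint ne Lint_f.
Qed.
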